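(* Let $J\subseteq S$. If $\Pi_\downarrow^J(u)=\Pi_\downarrow^J(v)$ for some $u,v\in\mathfrak{S}_n^J$, then $\Pi_\uparrow^J(u)=\Pi_\uparrow^J(v)$.
   Context: $\mathfrak{S}_n$ is the symmetric group on $[n]$, $s_i=(i,i+1)$, $S=\{s_1,\dots,s_{n-1}\}$, one-line notation $w=w_1\cdots w_n$, $\mathrm{inv}(w)=\{(i,j):i<j,\ w_i>w_j\}$, weak order $u\le_S v\iff\mathrm{inv}(u)\subseteq\mathrm{inv}(v)$. For $J\subseteq S$, $\mathfrak{S}_n^J$ is the set of $w$ with $w_i<w_{i+1}$ whenever $s_i\in J$. Writing $J=S\setminus\{s_{j_1},\dots,s_{j_r}\}$ with $j_1<\dots<j_r$, the $J$-regions are $\{1,\dots,j_1\},\{j_1+1,\dots,j_2\},\dots,\{j_r+1,\dots,n\}$. $w\in\mathfrak{S}_n^J$ is $(J,231)$-avoiding if there are no indices $i<j<k$ in pairwise different $J$-regions with $w_k<w_i<w_j$ and $w_i=w_k+1$, and $(J,132)$-avoiding if there are no indices $i<j<k$ in pairwise different $J$-regions with $w_i<w_k<w_j$ and $w_k=w_i+1$. For $w\in\mathfrak{S}_n^J$, $\Pi_\downarrow^J(w)$ is the unique greatest $(J,231)$-avoiding element of $\mathfrak{S}_n^J$ that is $\le_S w$, and $\Pi_\uparrow^J(w)$ is the unique least $(J,132)$-avoiding element of $\mathfrak{S}_n^J$ that is $\ge_S w$ (both exist). *)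

(* Permutations of [n] are modelled as 'S_n (perms of 'I_n);
   positions and values are 0-based (shift by 1 from the paper). *)
From mathcomp Require Import all_boot all_fingroup.
Set Implicit Arguments. Unset Strict Implicit. Unset Printing Implicit Defensive.

(* J ⊆ S is a set of indices 'I_n.-1; the 0-based index k stands for the
   simple transposition s_{k+1} = (k+1,k+2), swapping 0-based positions k, k+1. *)
Definition inJ (n : nat) (J : {set 'I_n.-1}) (k : nat) : bool :=
  [exists j : 'I_n.-1, (val j == k) && (j \in J)].

Definition is_inv (n : nat) (w : 'S_n) (i j : 'I_n) : bool :=
  (i < j) && (w j < w i).

Definition weak_le (n : nat) (u v : 'S_n) : Prop :=
  forall i j : 'I_n, is_inv u i j -> is_inv v i j.

Definition in_SJ (n : nat) (J : {set 'I_n.-1}) (w : 'S_n) : Prop :=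
  forall i j : 'I_n, j = i.+1 :> nat -> inJ J i -> w i < w j.

Definition same_region (n : nat) (J : {set 'I_n.-1}) (p q : 'I_n) : bool :=
  [forall k : 'I_n.-1, ((minn p q <= k) && (k < maxn p q)) ==> (k \in J)].

Definition diff_regions3 (n : nat) (J : {set 'I_n.-1}) (i j k : 'I_n) : Prop :=
  ~~ same_region J i j /\ ~~ same_region J j k /\ ~~ same_region J i k.

Definition J231_avoiding (n : nat) (J : {set 'I_n.-1}) (w : 'S_n) : Prop :=
  ~ exists i j k : 'I_n, [/\ i < j < k, diff_regions3 J i j k,
      w k < w i, w i < w j & (w i : nat) = (w k).+1].

Definition J132_avoiding (n : nat) (J : {set 'I_n.-1}) (w : 'S_n) : Prop :=
  ~ exists i j k : 'I_n, [/\ i < j < k, diff_regions3 J i j k,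
      w i < w k, w k < w j & (w k : nat) = (w i).+1].

Definition is_Pi_down (n : nat) (J : {set 'I_n.-1}) (w p : 'S_n) : Prop :=
  [/\ in_SJ J p, J231_avoiding J p, weak_le p w &
      forall x : 'S_n, in_SJ J x -> J231_avoiding J x -> weak_le x w -> weak_le x p].

Definition is_Pi_up (n : nat) (J : {set 'I_n.-1}) (w p : 'S_n) : Prop :=
  [/\ in_SJ J p, J132_avoiding J p, weak_le w p &
      forall x : 'S_n, in_SJ J x -> J132_avoiding J x -> weak_le w x -> weak_le p x].

From mathcomp Require Import all_boot all_fingroup zify.
From Stdlib Require Import Classical.
Set Implicit Arguments. Unset Strict Implicit. Unset Printing Implicit Defensive.

(* The key claim is: if t is (J,132)-avoiding and Π↓(x) ≤ t, then x ≤ t.  Given it,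
   Π↓(u) = Π↓(v) ≤ v ≤ Π↑(v) yields u ≤ Π↑(v), so Π↑(u) ≤ Π↑(v) by minimality, and
   symmetrically.  The claim goes by induction on the number of inversions of x.  If x
   avoids (J,231) then Π↓(x) = x.  Otherwise take a (J,231)-pattern (i,j,k) of x and swap
   the entries at positions i and k: as their values are consecutive, this removes only the
   inversion (i,k), stays in S_n^J, and turns the pattern into a (J,132)-pattern.  Π↓(x)
   avoids (J,231), hence lacks the inversion (i,k), so it is also Π↓ of the swapped
   permutation, which lies below t by induction; since t avoids (J,132), t has the
   inversion (i,k) as well.  These two facts about (i,k) have the same proof: were the
   entries at i and k in the wrong order, walking through the values between them would
   give two consecutive values, one at a position <= i and one at a position >= k, that
   form the forbidden pattern together with j. *)

Lemma bool_ivt (f : nat -> bool) lo hi : lo <= hi -> f lo != f hi ->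
  exists2 c, lo <= c < hi & f c = f lo /\ f c.+1 = f hi.
Proof.
elim: hi => [|h IH]; first by rewrite leqn0 => /eqP ->; rewrite eqxx.
rewrite leq_eqVlt ltnS => /predU1P [-> | le_lo_h]; first by rewrite eqxx.
have [fh | fh] := eqVneq (f h) (f lo); first by exists h => //; rewrite le_lo_h /=.
move=> f_lo_hi; have [|c /andP[lo_c c_h] fc] := IH le_lo_h; first by rewrite eq_sym.
exists c; first by rewrite lo_c ltnS ltnW.
by move: fh f_lo_hi fc; case: (f lo); case: (f h); case: (f h.+1).
Qed.

Section Permutations.
Variable n : nat.
Implicit Types (u w : 'S_n) (i k p q r : 'I_n).

Lemma perm_nat_eq w p q : ((w p : nat) == w q) = (p == q).
Proof. by rewrite val_eqE (inj_eq perm_inj). Qed.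

Lemma perm_ltn_neq w p q : p < q -> (w p : nat) != w q.
Proof. by move=> lt_pq; rewrite perm_nat_eq -val_eqE ltn_eqF. Qed.

Lemma perm_nat_onto w c : c < n -> exists p, (w p : nat) = c.
Proof. by move=> lt_cn; exists ((w^-1)%g (Ordinal lt_cn)); rewrite permKV. Qed.

Lemma card_ord_lt m : m <= n -> #|[set c : 'I_n | c < m]| = m.
Proof.
move=> le_mn; have widen_inj : injective (widen_ord le_mn) by move=> a b [] /val_inj.
rewrite -[RHS]card_ord -cardsT -(card_imset _ widen_inj).
apply: eq_card => c; rewrite inE; apply/idP/imsetP => [lt_cm | [a _ ->]]; last exact: ltn_ord a.
by exists (Ordinal lt_cm) => //; apply: val_inj.
Qed.

Lemma perm_rank w p : #|[set q | w q < w p]| = w p.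
Proof.
have -> : [set q | w q < w p] = w @^-1: [set c : 'I_n | c < w p] by apply/setP => q; rewrite !inE.
by rewrite card_preimset ?card_ord_lt 1?ltnW //; apply: perm_inj.
Qed.

Lemma perm_consecutive_split w (P : pred 'I_n) p q : w p < w q -> P p != P q ->
  exists a b, [/\ w p <= w a, (w b : nat) = (w a).+1, w b <= w q, P a = P p & P b = P q].
Proof.
move=> lt_pq P_pq; pose f (c : nat) := [exists a, ((w a : nat) == c) && P a].
have fE r : f (w r) = P r.
  by apply/existsP/idP => [[a /andP[]]|]; [rewrite perm_nat_eq => /eqP -> | exists r; rewrite eqxx].
have := @bool_ivt f _ _ (ltnW lt_pq); rewrite !fE => /(_ P_pq) [c /andP[le_pc lt_cq] [fc fc1]].
have [a wa] := perm_nat_onto w (ltn_trans lt_cq (ltn_ord _)).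
have [b wb] := perm_nat_onto w (leq_ltn_trans lt_cq (ltn_ord _)).
by exists a, b; rewrite -(fE a) -(fE b) wa wb.
Qed.

Lemma weak_le_trans u v w : weak_le u v -> weak_le v w -> weak_le u w.
Proof. by move=> le_uv le_vw p q /le_uv /le_vw. Qed.

Lemma weak_le_ascent u w p q : weak_le u w -> p < q -> w p < w q -> u p < u q.
Proof.
move=> le_uw lt_pq lt_wpq; rewrite ltn_neqAle perm_ltn_neq //= leqNgt; apply/negP => lt_uqp.
have /andP[_] : is_inv w p q by apply: le_uw; rewrite /is_inv lt_pq.
lia.
Qed.

Lemma weak_le_anti u w : weak_le u w -> weak_le w u -> u = w.
Proof.
move=> le_uw le_wu; have lt_uw p q : (u p < u q) = (w p < w q).
  case: (ltngtP p q) => [lt_pq | lt_qp | /val_inj ->]; last by rewrite !ltnn.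
    by apply/idP/idP; apply: weak_le_ascent.
  have inv_uw : is_inv u q p = is_inv w q p by apply/idP/idP; [apply: le_uw | apply: le_wu].
  by move: inv_uw; rewrite /is_inv lt_qp.
apply/permP => p; apply: val_inj; rewrite /= -(perm_rank u) -(perm_rank w).
by apply: eq_card => q; rewrite !inE lt_uw.
Qed.

Definition inversions w : {set 'I_n * 'I_n} := [set pq | is_inv w pq.1 pq.2].

Definition swap_entries w i k : 'S_n := (tperm i k * w)%g.

Lemma swap_entriesE w i k p : swap_entries w i k p = w (tperm i k p).
Proof. exact: permM. Qed.

Lemma adjacent_values_lt w i k r : (w i : nat) = (w k).+1 -> r != i -> r != k ->
  ((w r < w i) = (w r < w k)) * ((w i < w r) = (w k < w r)).
Proof. by rewrite -!(perm_nat_eq w) => wik ri rk; split; lia. Qed.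

Lemma swap_lt w i k p q : (w i : nat) = (w k).+1 ->
  ~~ ((p == i) && (q == k)) -> ~~ ((p == k) && (q == i)) ->
  (swap_entries w i k p < swap_entries w i k q) = (w p < w q).
Proof.
move=> wik; rewrite !swap_entriesE.
case: tpermP => [->|->|/eqP pi /eqP pk]; case: tpermP => [->|->|/eqP qi /eqP qk];
  rewrite ?eqxx ?ltnn //=;
  by rewrite ?(adjacent_values_lt wik pi pk) ?(adjacent_values_lt wik qi qk).
Qed.

Lemma is_inv_swap w i k p q : i < k -> (w i : nat) = (w k).+1 ->
  is_inv (swap_entries w i k) p q = is_inv w p q && ~~ ((p == i) && (q == k)).
Proof.
move=> lt_ik wik; rewrite /is_inv.
have [/andP[/eqP -> /eqP ->] | not_ik] := boolP ((p == i) && (q == k)).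
  by rewrite !swap_entriesE tpermL tpermR andbF lt_ik ltnNge wik leqnSn.
have [/andP[/eqP -> /eqP ->] | not_ki] := boolP ((p == k) && (q == i)).
  by rewrite ltnNge (ltnW lt_ik).
by rewrite /= andbT swap_lt // andbC.
Qed.

Lemma swap_weak_le w i k : i < k -> (w i : nat) = (w k).+1 ->
  weak_le (swap_entries w i k) w.
Proof. by move=> lt_ik wik p q; rewrite is_inv_swap // => /andP[]. Qed.

Lemma swap_inversions_proper w i k : i < k -> (w i : nat) = (w k).+1 ->
  inversions (swap_entries w i k) \proper inversions w.
Proof.
move=> lt_ik wik; apply/properP; split.
  by apply/subsetP => -[p q]; rewrite !inE; apply: swap_weak_le.
exists (i, k); rewrite !inE /is_inv lt_ik /=; first by rewrite wik.
by rewrite !swap_entriesE tpermL tpermR wik -leqNgt.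
Qed.

End Permutations.

Definition J231_pattern (n : nat) (J : {set 'I_n.-1}) (w : 'S_n) (i j k : 'I_n) : Prop :=
  [/\ i < j < k, diff_regions3 J i j k, w k < w i, w i < w j & (w i : nat) = (w k).+1].

Definition J132_pattern (n : nat) (J : {set 'I_n.-1}) (w : 'S_n) (i j k : 'I_n) : Prop :=
  [/\ i < j < k, diff_regions3 J i j k, w i < w k, w k < w j & (w k : nat) = (w i).+1].

Section Regions.
Variables (n : nat) (J : {set 'I_n.-1}).
Implicit Types (d t w x y : 'S_n) (a b i j k p q : 'I_n).

Lemma same_region_sub p q p' q' : p <= p' -> p' <= q' -> q' <= q ->
  same_region J p q -> same_region J p' q'.
Proof.
move=> le_pp' le_p'q' le_q'q /forallP reg_pq; apply/forallP => c; apply/implyP => /andP[lo hi].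
by apply: (implyP (reg_pq c)); apply/andP; split; lia.
Qed.

Lemma diff_regions3_widen a i j k b : a <= i -> i < j -> j < k -> k <= b ->
  diff_regions3 J i j k -> diff_regions3 J a j b.
Proof.
move=> le_ai lt_ij lt_jk le_kb [reg_ij [reg_jk reg_ik]].
by split; [|split]; [move: reg_ij | move: reg_jk | move: reg_ik];
   apply: contra; apply: same_region_sub; lia.
Qed.

Lemma swap_in_SJ w i k : i.+1 < k -> (w i : nat) = (w k).+1 ->
  in_SJ J w -> in_SJ J (swap_entries w i k).
Proof.
move=> lt_ik wik sw p q qp pJ; rewrite swap_lt //; first exact: sw.
- by apply/negP => /andP[/eqP pi /eqP qk]; move: qp lt_ik; rewrite pi qk => ->; rewrite ltnn.
- by apply/negP => /andP[/eqP pk /eqP qi]; move: qp lt_ik; rewrite pk qi => ->; lia.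
Qed.

Lemma swap_J231_pattern w i j k :
  J231_pattern J w i j k -> J132_pattern J (swap_entries w i k) i j k.
Proof.
move=> [/andP[lt_ij lt_jk] reg lt_wki lt_wij wik].
have ne_ij : i != j by rewrite -val_eqE ltn_eqF.
have ne_kj : k != j by rewrite -val_eqE gtn_eqF.
by split; rewrite ?lt_ij ?lt_jk // !swap_entriesE ?tpermL ?tpermR ?tpermD.
Qed.

Lemma J231_avoiding_below_pattern d x i j k :
  weak_le d x -> J231_avoiding J d -> J231_pattern J x i j k -> d i < d k.
Proof.
move=> le_dx avoid [/andP[lt_ij lt_jk] reg _ lt_xij xik].
have lt_ik : i < k := ltn_trans lt_ij lt_jk.
rewrite ltn_neqAle perm_ltn_neq //= leqNgt; apply/negP => lt_dki.
have lt_dij : d i < d j := weak_le_ascent le_dx lt_ij lt_xij.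
have [|a [b [le_dka dba le_dbi ai bi]]] :=
  perm_consecutive_split (P := fun r => r <= i) lt_dki; first by rewrite leqnn leqNgt lt_ik.
rewrite leqnn in bi; rewrite [k <= i]leqNgt lt_ik in ai.
have le_ka : k <= a.
  rewrite leqNgt; apply/negP => lt_ak.
  have lt_ia : i < a by rewrite ltnNge ai.
  have ne_ak := perm_ltn_neq d lt_ak.
  have inv_ia : is_inv d i a by rewrite /is_inv lt_ia; lia.
  have inv_ak : is_inv d a k by rewrite /is_inv lt_ak; lia.
  by move: (le_dx _ _ inv_ia) (le_dx _ _ inv_ak); rewrite /is_inv; lia.
apply: avoid; exists b, j, a; split; try lia.
exact: diff_regions3_widen reg.
Qed.

Lemma J132_avoiding_above_pattern y t i j k :
  weak_le y t -> J132_avoiding J t -> J132_pattern J y i j k -> t k < t i.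
Proof.
move=> le_yt avoid [/andP[lt_ij lt_jk] reg _ lt_ykj yki].
have lt_ik : i < k := ltn_trans lt_ij lt_jk.
rewrite ltn_neqAle eq_sym perm_ltn_neq //= leqNgt; apply/negP => lt_tik.
have /andP[_ lt_tkj] : is_inv t j k by apply: le_yt; rewrite /is_inv lt_jk.
have [|a [b [le_tia tba le_tbk ai bi]]] :=
  perm_consecutive_split (P := fun r => r <= i) lt_tik; first by rewrite leqnn leqNgt lt_ik.
rewrite leqnn in ai; rewrite [k <= i]leqNgt lt_ik in bi.
have le_kb : k <= b.
  rewrite leqNgt; apply/negP => lt_bk.
  have lt_ib : i < b by rewrite ltnNge bi.
  have ne_bk := perm_ltn_neq t lt_bk.
  have lt_tib : t i < t b by lia.
  have lt_tbk : t b < t k by lia.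
  have := weak_le_ascent le_yt lt_ib lt_tib; have := weak_le_ascent le_yt lt_bk lt_tbk.
  lia.
apply: avoid; exists a, j, b; split; try lia.
exact: diff_regions3_widen reg.
Qed.

Lemma Pi_down_le_J132_avoiding x d t :
  in_SJ J x -> is_Pi_down J x d -> J132_avoiding J t -> weak_le d t -> weak_le x t.
Proof.
have [m] := ubnP #|inversions x|.
elim: m x => // m IH x lt_x_m sx [sd ad le_dx max_d] avoid_t le_dt.
have [ax | /NNPP [i [j [k pat]]]] := classic (J231_avoiding J x).
  exact: weak_le_trans (max_d x sx ax (fun _ _ => id)) le_dt.
have [/andP[lt_ij lt_jk] _ _ _ xik] := pat.
have lt_ik := ltn_trans lt_ij lt_jk.
have le_x'x := swap_weak_le lt_ik xik.
have le_dx' : weak_le d (swap_entries x i k).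
  move=> p q inv_d; rewrite is_inv_swap // le_dx //=.
  apply/negP => /andP[/eqP ep /eqP eq]; move: inv_d; rewrite ep eq /is_inv.
  by have := J231_avoiding_below_pattern le_dx ad pat; lia.
have le_x't : weak_le (swap_entries x i k) t.
  apply: IH avoid_t le_dt.
  - exact: leq_trans (proper_card (swap_inversions_proper lt_ik xik)) lt_x_m.
  - exact: swap_in_SJ (leq_ltn_trans lt_ij lt_jk) xik sx.
  - by split => // y sy ay le_yx'; apply: max_d sy ay (weak_le_trans le_yx' le_x'x).
move=> p q inv_x; have [/andP[/eqP -> /eqP ->] | not_ik] := boolP ((p == i) && (q == k)).
  by rewrite /is_inv lt_ik (J132_avoiding_above_pattern le_x't avoid_t (swap_J231_pattern pat)).
by apply: le_x't; rewrite is_inv_swap // inv_x.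
Qed.

End Regions.

Theorem lemma3p17 (n : nat) (J : {set 'I_n.-1}) (u v du dv uu uv : 'S_n) :
  in_SJ J u -> in_SJ J v ->
  is_Pi_down J u du -> is_Pi_down J v dv ->
  is_Pi_up J u uu -> is_Pi_up J v uv ->
  du = dv -> uu = uv.
Proof.
move=> su sv pu pv [s_uu a_uu le_u_uu min_uu] [s_uv a_uv le_v_uv min_uv] du_dv.
have [_ _ le_du_u _] := pu; have [_ _ le_dv_v _] := pv.
apply: weak_le_anti; [apply: (min_uu _ s_uv a_uv) | apply: (min_uv _ s_uu a_uu)].
- apply: (Pi_down_le_J132_avoiding su pu a_uv).
  by rewrite du_dv; apply: weak_le_trans le_dv_v le_v_uv.
- apply: (Pi_down_le_J132_avoiding sv pv a_uu).
  by rewrite -du_dv; apply: weak_le_trans le_du_u le_u_uu.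
Qed.
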